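(* For every term $t\in T( *,\circ,x)$ and every $f\in\mathcal{G}(\mathtt{ALD})$ such that $t\cdot f$ is defined, we have $\mathcal{C}(t\cdot f)\sim\mathcal{C}(t)\bullet\mathrm{sh}_0(f)$.
   Context: $T( *,\circ,x)$: terms in the single variable $x$ with binary symbols $*,\circ$. Addresses are finite sequences over $\{0,1\}$, $\varepsilon$ empty; $t/\alpha$ the subterm at $\alpha$. Partial operators act on the right, $f\bullet g$ = ''$f$ then $g$'', $f^{-1}$ the inverse partial map. $S^{+}_{\alpha}$: defined iff $t/\alpha=t_1*(t_2\square t_3)$, $\square\in\{*,\circ\}$, replacing it by $(t_1*t_2)\square(t_1*t_3)$; $A^{+}_{\alpha}$: defined iff $t/\alpha=t_1*(t_2*t_3)$, replacing it by $(t_1\circ t_2)*t_3$; $S^-_\alpha,A^-_\alpha$ the inverses. $\mathcal{G}(\mathtt{ALD})$ is the monoid of partial maps generated by these. $\mathrm{sh}_\beta(f)$ applies $f$ to the $\beta$-th subterm. The map $\mathcal{C}:T( *,\circ,x)\to\mathcal{G}(\mathtt{ALD})$ is defined by $\mathcal{C}(x)=\mathrm{id}$, $\mathcal{C}(t_1*t_2)=\mathcal{C}(t_1)\bullet\mathrm{sh}_1(\mathcal{C}(t_2))\bullet S^{+}_{\varepsilon}\bullet\mathrm{sh}_1(\mathcal{C}(t_1))^{-1}$, $\mathcal{C}(t_1\circ t_2)=\mathcal{C}(t_1)\bullet\mathrm{sh}_1(\mathcal{C}(t_2))\bullet A^{+}_{\varepsilon}$. For partial maps $f,g$ on terms, $f\sim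 g$ means there exists at least one term $u$ on which both $f$ and $g$ are defined with $u\cdot f=u\cdot g$. *)

(* Partial maps on terms are represented as (functional)
   binary relations: [f t u] means "t . f is defined and equals u". *)
From Stdlib Require Import List.
Import ListNotations.

Inductive term : Type :=
| X : term
| Star : term -> term -> term
| Circ : term -> term -> term.

(* addresses: finite sequences over {0,1}; false = 0 (left), true = 1 (right) *)
Definition address := list bool.

Definition pmap := term -> term -> Prop.

Definition pid : pmap := fun t u => t = u.

Definition pcomp (f g : pmap) : pmap := fun t v => exists u, f t u /\ g u v.

Definition pinv (f : pmap) : pmap := fun t u => f u t.

Fixpoint sh (a : address) (f : pmap) : pmap :=
  match a with
  | [] => f
  | b :: a' => fun t u =>
      match t, u with
      | Star t1 t2, Star u1 u2 =>
          if b then t1 = u1 /\ sh a' f t2 u2 else sh a' f t1 u1 /\ t2 = u2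
      | Circ t1 t2, Circ u1 u2 =>
          if b then t1 = u1 /\ sh a' f t2 u2 else sh a' f t1 u1 /\ t2 = u2
      | _, _ => False
      end
  end.

Definition S_root : pmap := fun t u =>
  exists t1 t2 t3,
    (t = Star t1 (Star t2 t3) /\ u = Star (Star t1 t2) (Star t1 t3)) \/
    (t = Star t1 (Circ t2 t3) /\ u = Circ (Star t1 t2) (Star t1 t3)).

Definition A_root : pmap := fun t u =>
  exists t1 t2 t3, t = Star t1 (Star t2 t3) /\ u = Star (Circ t1 t2) t3.

Definition Splus (a : address) : pmap := sh a S_root.
Definition Sminus (a : address) : pmap := pinv (Splus a).
Definition Aplus (a : address) : pmap := sh a A_root.
Definition Aminus (a : address) : pmap := pinv (Aplus a).

Inductive gen : Type :=
| GSp : address -> gen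
| GSm : address -> gen
| GAp : address -> gen
| GAm : address -> gen.

Definition gen_map (g : gen) : pmap :=
  match g with
  | GSp a => Splus a
  | GSm a => Sminus a
  | GAp a => Aplus a
  | GAm a => Aminus a
  end.

Fixpoint word_map (w : list gen) : pmap :=
  match w with
  | [] => pid
  | g :: w' => pcomp (gen_map g) (word_map w')
  end.

Definition in_GALD (f : pmap) : Prop :=
  exists w : list gen, forall t u, f t u <-> word_map w t u.

Fixpoint C (t : term) : pmap :=
  match t with
  | X => pid
  | Star t1 t2 =>
      pcomp (pcomp (pcomp (C t1) (sh [true] (C t2))) (Splus []))
            (pinv (sh [true] (C t1)))
  | Circ t1 t2 =>
      pcomp (pcomp (C t1) (sh [true] (C t2))) (Aplus [])
  end.

Definition psim (f g : pmap) : Prop := exists u v, f u v /\ g u v.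

(* Let the weight of t count the occurrences of x in t that do not lie inside
   the left factor of a [*].  Every generator S^±, A^± preserves it, hence so
   does every f in G(ALD), and t . f has the weight of t.  On the other hand
   C(t) maps the right comb x * (x * ... (x * x)) with n variables, for n at
   least the number of variables of t, to t * (right comb with n - weight t
   variables).  So if t . f = t', both C(t')
   and C(t) • sh_0(f) send a long enough right comb to the same term. *)
From Stdlib Require Import List Lia Arith.
Import ListNotations.

Fixpoint weight (t : term) : nat :=
  match t with
  | X => 1
  | Star _ t2 => weight t2
  | Circ t1 t2 => weight t1 + weight t2
  end.

Fixpoint leaves (t : term) : nat :=
  match t with
  | X => 1
  | Star t1 t2 | Circ t1 t2 => leaves t1 + leaves t2
  end.

Fixpoint right_comb (n : nat) : term :=
  match n with
  | 0 => X
  | S m => Star X (right_comb m)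
  end.

Lemma weight_le_leaves (t : term) : weight t <= leaves t.
Proof. induction t; simpl; lia. Qed.

Definition preserves_weight (g : pmap) : Prop :=
  forall t u, g t u -> weight t = weight u.

Lemma pid_preserves_weight : preserves_weight pid.
Proof. intros t u ->; reflexivity. Qed.

Lemma pcomp_preserves_weight (f g : pmap) :
  preserves_weight f -> preserves_weight g -> preserves_weight (pcomp f g).
Proof.
  intros Hf Hg t v (u & Htu & Huv).
  rewrite (Hf _ _ Htu); exact (Hg _ _ Huv).
Qed.

Lemma pinv_preserves_weight (f : pmap) :
  preserves_weight f -> preserves_weight (pinv f).
Proof. intros Hf t u Hut; symmetry; exact (Hf _ _ Hut). Qed.

Lemma sh_preserves_weight (a : address) (f : pmap) :
  preserves_weight f -> preserves_weight (sh a f).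
Proof.
  revert f; induction a as [|b a IH]; intros f Hf t u H; simpl in H.
  - exact (Hf _ _ H).
  - destruct t, u; try contradiction; destruct b; destruct H as [H1 H2];
      subst; simpl; try reflexivity;
      try rewrite (IH f Hf _ _ H1); try rewrite (IH f Hf _ _ H2); reflexivity.
Qed.

Lemma S_root_preserves_weight : preserves_weight S_root.
Proof. intros t u (t1 & t2 & t3 & [[-> ->]|[-> ->]]); simpl; lia. Qed.

Lemma A_root_preserves_weight : preserves_weight A_root.
Proof. intros t u (t1 & t2 & t3 & -> & ->); simpl; lia. Qed.

Lemma gen_map_preserves_weight (g : gen) : preserves_weight (gen_map g).
Proof.
  pose proof S_root_preserves_weight; pose proof A_root_preserves_weight.
  destruct g as [a|a|a|a]; unfold gen_map, Sminus, Aminus, Splus, Aplus;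
    auto using pinv_preserves_weight, sh_preserves_weight.
Qed.

Lemma word_map_preserves_weight (w : list gen) :
  preserves_weight (word_map w).
Proof.
  induction w as [|g w IH]; simpl.
  - exact pid_preserves_weight.
  - exact (pcomp_preserves_weight _ _ (gen_map_preserves_weight g) IH).
Qed.

Lemma in_GALD_preserves_weight (f : pmap) : in_GALD f -> preserves_weight f.
Proof.
  intros [w Hw] t u Htu; apply Hw in Htu.
  exact (word_map_preserves_weight w _ _ Htu).
Qed.

Lemma C_right_comb (t : term) (n : nat) : leaves t <= n ->
  C t (right_comb n) (Star t (right_comb (n - weight t))).
Proof.
  revert n; induction t as [|t1 IH1 t2 IH2|t1 IH1 t2 IH2]; intros n Hn; simpl in *.
  - destruct n as [|n]; [lia|]; simpl; rewrite Nat.sub_0_r; reflexivity.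
  - pose proof (weight_le_leaves t1); pose proof (weight_le_leaves t2).
    set (r := right_comb (n - weight t1 - weight t2)).
    exists (Star (Star t1 t2) (Star t1 r)); split.
    + exists (Star t1 (Star t2 r)); split.
      * exists (Star t1 (right_comb (n - weight t1))); split.
        -- apply IH1; lia.
        -- split; [reflexivity|]; apply IH2; lia.
      * exists t1, t2, r; left; split; reflexivity.
    + split; [reflexivity|].
      replace r with (right_comb (n - weight t2 - weight t1))
        by (unfold r; f_equal; lia).
      apply IH1; lia.
  - pose proof (weight_le_leaves t1).
    exists (Star t1 (Star t2 (right_comb (n - weight t1 - weight t2)))); split.
    + exists (Star t1 (right_comb (n - weight t1))); split.
      * apply IH1; lia.
      * split; [reflexivity|]; apply IH2; lia.
    + exists t1, t2, (right_comb (n - weight t1 - weight t2)); split;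
        [reflexivity|].
      rewrite Nat.sub_add_distr; reflexivity.
Qed.

Theorem lemma3p5 :
  forall (t : term) (f : pmap), in_GALD f ->
  forall t' : term, f t t' ->
  psim (C t') (pcomp (C t) (sh [false] f)).
Proof.
  intros t f Hf t' Htt'.
  assert (Hweight : weight t = weight t')
    by exact (in_GALD_preserves_weight f Hf _ _ Htt').
  set (n := leaves t + leaves t').
  exists (right_comb n), (Star t' (right_comb (n - weight t'))); split.
  - apply C_right_comb; unfold n; lia.
  - exists (Star t (right_comb (n - weight t))); split.
    + apply C_right_comb; unfold n; lia.
    + simpl; rewrite Hweight; split; [exact Htt'|reflexivity].
Qed.
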